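(* Let $(V,\eta)$ be a real vector space of dimension $n+2$, $n>1$, with symmetric bilinear form $\eta$ of signature $(+,-,\dots,-)$, $G=SO_0(\eta)$, $\mathfrak g=so(\eta)$. Fix $\mathbf s,\mathbf t\in V$ with $\eta(\mathbf s,\mathbf s)=-1$, $\eta(\mathbf t,\mathbf t)=1$, $\eta(\mathbf s,\mathbf t)=0$, $\mathbf f:=\mathbf t-\mathbf s$, $\mathfrak a:=\{Y\in\mathfrak g:Y\mathbf s=0\}$, $\mathfrak c:=\mathrm{span}\{\Lambda_{x\mathbf f}:x\in\mathbf s^\perp\}$, $A:=\{g\in G:g\mathbf s=\pm\mathbf s\}$, and $\mathfrak a^0\subset\mathfrak g^*$ the annihilator of $\mathfrak a$. Let $(\rho_\alpha)$ be an orthonormal basis of $\mathfrak a^0$ with respect to $\tilde k$, and assume elements $c_\alpha\in\mathfrak c$ satisfy $\tilde k(\psi,\mathrm{ad}^\#(a)\rho_\alpha)=\langle\psi,\mathrm{ad}(a)c_\alpha\rangle$ for all $\psi\in\mathfrak a^0$ and all $a\in A$. Then for every $\varphi\in\mathfrak a^0$, as functions on $\mathfrak a^0\times A$, $$\tilde k_\varphi=\sum_\alpha \mathrm{sgn}(\rho_\alpha)\,\tilde k_{\varphi\rho_\alpha}\,\widetilde{X^L_{c_\alpha}}.$$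
   Context: $\Lambda_{xy}(z)=\eta(y,z)x-\eta(x,z)y$ for $x,y,z\in V$. $k$ is the bilinear form on $\mathfrak g$ with $k(\Lambda_{xy},\Lambda_{zt})=\eta(x,t)\eta(y,z)-\eta(x,z)\eta(y,t)$, also viewed as the isomorphism $k:\mathfrak g\to\mathfrak g^*$, $\langle k(X),Y\rangle=k(X,Y)$; $\tilde k(\varphi,\psi):=k(k^{-1}\varphi,k^{-1}\psi)$ on $\mathfrak g^*$. The restriction of $\tilde k$ to $\mathfrak a^0$ is nondegenerate of Minkowski signature; an orthonormal basis $(\rho_\alpha)$ means $\tilde k(\rho_\alpha,\rho_\beta)=\tilde k(\rho_\alpha,\rho_\alpha)\delta_{\alpha\beta}$ with $|\tilde k(\rho_\alpha,\rho_\alpha)|=1$, and $\mathrm{sgn}(\rho_\alpha):=\tilde k(\rho_\alpha,\rho_\alpha)$. $\mathrm{ad}(g)X=gXg^{-1}$, $\mathrm{ad}^\#(g)=\mathrm{ad}(g^{-1})^*$. Functions on $\mathfrak a^0\times A$: $\tilde k_\varphi(\chi,a)=\tilde k(\varphi,\chi)$, $\tilde k_{\varphi\psi}(\chi,a)=\tilde k(\varphi,\mathrm{ad}^\#(a)\psi)$, and for $p\in\mathfrak c$, $\widetilde{X^L_p}(\chi,a)=\langle\chi,\mathrm{ad}(a)p\rangle$. *)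

From HB Require Import structures.
From mathcomp Require Import all_boot all_order all_algebra.
From mathcomp Require Import reals.
Unset Printing Implicit Defensive.
Import GRing.Theory Num.Theory.
Local Open Scope ring_scope.

Section Defs.
Variable R : realType.
Variable n : nat.
(* V = 'cV[R]_(n.+2) (any real vector space of dimension n+2 is isomorphic to it);
   etaf is given by its Gram matrix E. *)
Variable E : 'M[R]_n.+2.

Definition etaf (x y : 'cV[R]_n.+2) : R := (x^T *m E *m y) 0 0.

Definition lorentz_form : Prop :=
  E^T = E /\ exists P : 'M[R]_n.+2, P \in unitmx /\
    P^T *m E *m P = diag_mx (\row_(i < n.+2) (if i == ord0 then 1 else -1)).

(* Lambda_{xy} z = etaf(y,z) x - etaf(x,z) y *)
Definition Lam (x y : 'cV[R]_n.+2) : 'M[R]_n.+2 :=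
  x *m (y^T *m E) - y *m (x^T *m E).

Definition so_map : 'End('M[R]_n.+2) := linfun (fun X : 'M[R]_n.+2 => X^T *m E + E *m X).
Definition gsp : {vspace 'M[R]_n.+2} := lker so_map.
Definition gT := subvs_of gsp.
Definition dualT := 'Hom(gT, R^o).

(* the bilinear form k on g: k(X,Y) = (1/2) tr(XY); this satisfies
   k(Lam x y, Lam z t) = etaf(x,t)etaf(y,z) - etaf(x,z)etaf(y,t) *)
Definition kf (X Y : gT) : R := 2^-1 * \tr (vsval X *m vsval Y).
Definition kmap : 'Hom(gT, dualT) :=
  linfun (fun X : gT => linfun (fun Y : gT => (kf X Y : R^o))).
Definition kinv : 'Hom(dualT, gT) := (kmap^-1)%VF.
Definition ktil (phi psi : dualT) : R := kf (kinv phi) (kinv psi).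

(* G = SO_0(etaf): etaf-isometries of determinant 1 that are orthochronous
   (preserve each cone of timelike vectors), i.e. the identity component *)
Definition inG (g : 'M[R]_n.+2) : Prop :=
  g^T *m E *m g = E /\ \det g = 1 /\
  (forall v : 'cV[R]_n.+2, 0 < etaf v v -> 0 < etaf v (g *m v)).

Definition inA (s : 'cV[R]_n.+2) (g : 'M[R]_n.+2) : Prop :=
  inG g /\ (g *m s = s \/ g *m s = - s).

Definition ad (g : 'M[R]_n.+2) : 'End(gT) :=
  linfun (fun X : gT => vsproj gsp (g *m vsval X *m invmx g)).
Definition adsharp (g : 'M[R]_n.+2) : 'End(dualT) :=
  linfun (fun psi : dualT => (psi \o ad (invmx g))%VF).

Definition in_a (s : 'cV[R]_n.+2) (Y : gT) : Prop := vsval Y *m s = 0.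
Definition in_a0 (s : 'cV[R]_n.+2) (phi : dualT) : Prop :=
  forall Y : gT, in_a s Y -> phi Y = 0.

Definition sperp (s : 'cV[R]_n.+2) : {vspace 'cV[R]_n.+2} :=
  lker (linfun (fun x : 'cV[R]_n.+2 => (etaf x s : R^o))).
Definition cspace (s f : 'cV[R]_n.+2) : {vspace 'M[R]_n.+2} :=
  (linfun (fun x : 'cV[R]_n.+2 => Lam x f) @: sperp s)%VS.

Definition sgn (rho : dualT) : R := ktil rho rho.

(* functions on a^0 x A *)
Definition ktil_fun (phi chi : dualT) (a : 'M[R]_n.+2) : R := ktil phi chi.
Definition ktil2_fun (phi psi chi : dualT) (a : 'M[R]_n.+2) : R :=
  ktil phi (adsharp a psi).
Definition XL_fun (p : gT) (chi : dualT) (a : 'M[R]_n.+2) : R := chi (ad a p).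

End Defs.
Arguments etaf {R n} E x y.
Arguments lorentz_form {R n} E.
Arguments Lam {R n} E x y.
Arguments so_map {R n} E.
Arguments gsp {R n} E.
Arguments gT {R n} E.
Arguments dualT {R n} E.
Arguments kf {R n} E X Y.
Arguments kmap {R n} E.
Arguments kinv {R n} E.
Arguments ktil {R n} E phi psi.
Arguments inG {R n} E g.
Arguments inA {R n} E s g.
Arguments ad {R n} E g.
Arguments adsharp {R n} E g.
Arguments in_a {R n} E s Y.
Arguments in_a0 {R n} E s phi.
Arguments sperp {R n} E s.
Arguments cspace {R n} E s f.
Arguments sgn {R n} E rho.
Arguments ktil_fun {R n} E phi chi a.
Arguments ktil2_fun {R n} E phi psi chi a.
Arguments XL_fun {R n} E p chi a.

(* With S := ad#(a^-1) chi, which again lies in a^0, the hypothesis on the c_i at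
   a = 1 gives chi(ad(a) c_i) = S(c_i) = k~(S, rho_i).  The right-hand side is
   therefore k~(phi, ad#(a) sum_i sgn(rho_i) k~(S, rho_i) rho_i), and the inner sum
   is the orthonormal expansion of S, so the right-hand side is
   k~(phi, ad#(a) S) = k~(phi, chi). *)
From HB Require Import structures.
From mathcomp Require Import all_boot all_order all_algebra.
From mathcomp Require Import reals.
Import GRing.Theory Num.Theory.
Local Open Scope ring_scope.

Lemma linfunE_linear (K : fieldType) (aT rT : vectType K) (f : aT -> rT) :
  linear f -> linfun f =1 f.
Proof.
move=> f_lin x.
pose F : {linear aT -> rT} := HB.pack f (GRing.isLinear.Build K aT rT *:%R f f_lin).
exact: (lfunE F x).
Qed.

Section LorentzAlgebra.
Context {R : realType} {n : nat} {E : 'M[R]_n.+2}.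

Lemma so_mapE X : so_map E X = X^T *m E + E *m X.
Proof.
rewrite /so_map linfunE_linear // => k A B.
rewrite linearD linearZ /= mulmxDl mulmxDr -scalemxAl -scalemxAr scalerDr.
by rewrite addrACA.
Qed.

Lemma in_gsp X : (X \in gsp E) = (X^T *m E + E *m X == 0).
Proof. by rewrite /gsp memv_ker so_mapE. Qed.

Lemma isometry_invmx g : g \in unitmx -> g^T *m E *m g = E ->
  (invmx g)^T *m E *m invmx g = E.
Proof.
move=> gU hg; rewrite -{1}hg !mulmxA -trmx_mul mulmxV // trmx1 mul1mx.
by rewrite -mulmxA mulmxV // mulmx1.
Qed.

Lemma gsp_conj (g X : 'M[R]_n.+2) :
  g \in unitmx -> g^T *m E *m g = E -> X \in gsp E ->
  g *m X *m invmx g \in gsp E.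
Proof.
move=> gU hg; rewrite !in_gsp => /eqP hX.
set Gi := invmx g.
have trgE : g^T *m E = E *m Gi by rewrite -{2}hg -!mulmxA mulmxV // mulmx1.
have Eg : E *m g = Gi^T *m E.
  by rewrite -{2}hg !mulmxA -trmx_mul mulmxV // trmx1 mul1mx.
rewrite !trmx_mul -!mulmxA trgE !mulmxA Eg.
rewrite -(mulmxA (Gi^T *m E)) -(mulmxA Gi^T E) -(mulmxA Gi^T X^T).
by rewrite (mulmxA E X Gi) (mulmxA Gi^T (E *m X) Gi) -mulmxDl -mulmxDr hX mulmx0 mul0mx.
Qed.

Lemma adE g X : ad E g X = vsproj (gsp E) (g *m vsval X *m invmx g).
Proof.
rewrite /ad linfunE_linear // => k A B.
by rewrite linearP /= mulmxDl -scalemxAl linearP.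
Qed.

Lemma ad_valE g X : g \in unitmx -> g^T *m E *m g = E ->
  vsval (ad E g X) = g *m vsval X *m invmx g.
Proof. by move=> gU hg; rewrite adE vsprojK // gsp_conj // subvsP. Qed.

Lemma ad1 X : ad E 1%:M X = X.
Proof. by rewrite adE invmx1 mul1mx mulmx1 vsvalK. Qed.

Lemma ad_invmxK g X : g \in unitmx -> g^T *m E *m g = E ->
  ad E g (ad E (invmx g) X) = X.
Proof.
move=> gU hg; apply: val_inj => /=.
rewrite ad_valE // ad_valE ?unitmx_inv ?isometry_invmx // invmxK.
by rewrite !mulmxA mulmxV // mul1mx -mulmxA mulmxV // mulmx1.
Qed.

Lemma adsharpE g psi : adsharp E g psi = (psi \o ad E (invmx g))%VF.
Proof.
rewrite /adsharp linfunE_linear // => k A B.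
by rewrite comp_lfunDl comp_lfunZl.
Qed.

Lemma adsharp1 psi : adsharp E 1%:M psi = psi.
Proof. by rewrite adsharpE invmx1; apply/lfunP => Y; rewrite comp_lfunE ad1. Qed.

Lemma adsharp_invmxE g psi Y : adsharp E (invmx g) psi Y = psi (ad E g Y).
Proof. by rewrite adsharpE comp_lfunE invmxK. Qed.

Lemma adsharp_invmxK g psi : g \in unitmx -> g^T *m E *m g = E ->
  adsharp E g (adsharp E (invmx g) psi) = psi.
Proof.
move=> gU hg; apply/lfunP => Y.
by rewrite adsharpE comp_lfunE adsharp_invmxE ad_invmxK.
Qed.

Lemma inA1 s : inA E s 1%:M.
Proof.
split; last by left; rewrite mul1mx.
split; first by rewrite trmx1 mul1mx mulmx1.
by split; [rewrite det1 | move=> v; rewrite mul1mx].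
Qed.

Lemma inA_unitmx {s a} : inA E s a -> a \in unitmx.
Proof. by case=> [[_ [deta _]] _]; rewrite unitmxE deta unitr1. Qed.

Lemma inA_isometry {s a} : inA E s a -> a^T *m E *m a = E.
Proof. by case=> [[]]. Qed.

Lemma invmx_inA_vec {s a} : inA E s a -> invmx a *m s = s \/ invmx a *m s = - s.
Proof.
move=> aA; have aU := inA_unitmx aA; case: aA => _ [as_s|as_Ns]; [left|right].
  by rewrite -{1}as_s mulKmx.
by rewrite -{1}[s]opprK -as_Ns mulmxN mulKmx.
Qed.

Lemma in_a_ad s a Y : inA E s a -> in_a E s Y -> in_a E s (ad E a Y).
Proof.
move=> aA Ys; rewrite /in_a ad_valE ?(inA_unitmx aA) ?(inA_isometry aA) //.
rewrite -!mulmxA.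
by case: (invmx_inA_vec aA) => ->; rewrite ?mulmxN Ys mulmx0 ?oppr0.
Qed.

Lemma in_a0_adsharp_invmx s a psi :
  inA E s a -> in_a0 E s psi -> in_a0 E s (adsharp E (invmx a) psi).
Proof. by move=> aA psi0 Y Ys; rewrite adsharp_invmxE psi0 //; apply: in_a_ad. Qed.

Lemma ktilDl psi : {morph ktil E ^~ psi : u v / u + v}.
Proof. by move=> u v; rewrite /ktil /kf !linearD /= ?mulmxDl ?mxtraceD mulrDr. Qed.

Lemma ktilZl psi k u : ktil E (k *: u) psi = k * ktil E u psi.
Proof. by rewrite /ktil /kf !linearZ /= -?scalemxAl ?mxtraceZ /= mulrCA. Qed.

Lemma ktilDr psi : {morph ktil E psi : u v / u + v}.
Proof. by move=> u v; rewrite /ktil /kf !linearD /= ?mulmxDr ?mxtraceD mulrDr. Qed.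

Lemma ktilZr psi k u : ktil E psi (k *: u) = k * ktil E psi u.
Proof. by rewrite /ktil /kf !linearZ /= -?scalemxAr ?mxtraceZ /= mulrCA. Qed.

Lemma ktil0l psi : ktil E 0 psi = 0.
Proof. by rewrite -(scale0r (0 : dualT E)) ktilZl mul0r. Qed.

Lemma ktil0r psi : ktil E psi 0 = 0.
Proof. by rewrite -(scale0r (0 : dualT E)) ktilZr mul0r. Qed.

Lemma ktil_suml (I : finType) (F : I -> dualT E) psi :
  ktil E (\sum_i F i) psi = \sum_i ktil E (F i) psi.
Proof. exact: (big_morph (ktil E ^~ psi) (ktilDl psi) (ktil0l psi)). Qed.

Lemma ktil_sumr (I : finType) (F : I -> dualT E) psi :
  ktil E psi (\sum_i F i) = \sum_i ktil E psi (F i).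
Proof. exact: (big_morph (ktil E psi) (ktilDr psi) (ktil0r psi)). Qed.

Lemma ktil_orthonormal_expansion (I : finType) (rho : I -> dualT E) u :
  (forall i j, i != j -> ktil E (rho i) (rho j) = 0) ->
  (forall i, `|ktil E (rho i) (rho i)| = 1) ->
  u \in <<[seq rho i | i <- enum I]>>%VS ->
  u = \sum_i (sgn E (rho i) * ktil E u (rho i)) *: rho i.
Proof.
move=> rho_orth rho_norm; rewrite span_def big_map big_enum /=.
move=> /memv_sumP[v v_line ->]; apply: eq_bigr => i _.
have v_rho j : exists k, v j = k *: rho j by apply/vlineP/v_line.
have [k vi] := v_rho i.
rewrite ktil_suml (bigD1 i) //= big1 ?addr0; last first.
  by move=> j ji; have [kj ->] := v_rho j; rewrite ktilZl rho_orth ?mulr0.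
rewrite vi ktilZl /sgn mulrCA -expr2 -real_normK ?num_real // rho_norm.
by rewrite expr1n mulr1.
Qed.

End LorentzAlgebra.

Theorem lemma2p1 (R : realType) (n : nat) (E : 'M[R]_n.+2)
    (s t : 'cV[R]_n.+2) (I : finType)
    (rho : I -> dualT E) (c : I -> gT E) :
  (1 < n)%N ->
  lorentz_form E ->
  etaf E s s = -1 -> etaf E t t = 1 -> etaf E s t = 0 ->
  (* (rho_i) is a basis of a^0 *)
  (forall i, in_a0 E s (rho i)) ->
  free [seq rho i | i <- enum I] ->
  (forall phi, in_a0 E s phi -> phi \in <<[seq rho i | i <- enum I]>>%VS) ->
  (* orthonormal for tilde k *)
  (forall i j, i != j -> ktil E (rho i) (rho j) = 0) ->
  (forall i, `|ktil E (rho i) (rho i)| = 1) ->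
  (* c_i in c, with f = t - s *)
  (forall i, vsval (c i) \in cspace E s (t - s)) ->
  (forall i (psi : dualT E) (a : 'M[R]_n.+2), in_a0 E s psi -> inA E s a ->
     ktil E psi (adsharp E a (rho i)) = psi (ad E a (c i))) ->
  forall phi : dualT E, in_a0 E s phi ->
  forall (chi : dualT E) (a : 'M[R]_n.+2), in_a0 E s chi -> inA E s a ->
    ktil_fun E phi chi a
    = \sum_i sgn E (rho i) * ktil2_fun E phi (rho i) chi a * XL_fun E (c i) chi a.
Proof.
move=> _ _ _ _ _ _ _ rho_span rho_orth rho_norm _ c_rho phi _ chi a chi0 aA.
set S := adsharp E (invmx a) chi.
have S0 : in_a0 E s S by exact: in_a0_adsharp_invmx.
have chi_c i : chi (ad E a (c i)) = ktil E S (rho i).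
  by rewrite -adsharp_invmxE -[in RHS](adsharp1 (rho i)) c_rho ?ad1 //; apply: inA1.
rewrite /ktil_fun /ktil2_fun /XL_fun.
under eq_bigr => i _ do rewrite chi_c mulrAC -ktilZr -linearZ /=.
rewrite -ktil_sumr -linear_sum /= -ktil_orthonormal_expansion ?rho_span //.
by rewrite adsharp_invmxK ?(inA_unitmx aA) ?(inA_isometry aA).
Qed.
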